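(* Let $G$ be the path graph on $n$ vertices $v_1,\dots,v_n$ (with $v_t$ adjacent to $v_{t+1}$ for $1\le t<n$; the linear nearest-neighbor architecture). The quantum hashing circuit produced by the construction in the context on $n$ qubits has CNOT cost $3n-5$ for one application and $3n\ell-7\ell+2$ for $\ell$ applications with the path strategy.
   Context: Each vertex carries one physical qubit; two-qubit gates only act on qubits at adjacent vertices. The shortest walk visiting all vertices used is $P=(v_1,\dots,v_n)$. $CR_y(\xi)=\mathrm{diag}(I,R_y(\xi))$; SWAP exchanges two qubits. Single application along a walk $(x_1,\dots,x_k)$: target starts on $x_2$; $U=\emptyset$; apply $CR_y$ (control $x_1$, target $x_2$), add $x_1$ to $U$, $j=2$; loop: if $x_{j+1}\notin U$ apply $CR_y$ (control $x_{j+1}$, target $x_j$) and add $x_{j+1}$ to $U$; if $j=k-1$ stop; else if $x_{j+2}=x_j$ set $j\leftarrow j+2$, otherwise apply SWAP to $x_j,x_{j+1}$ and set $j\leftarrow j+1$; repeat. Path strategy for $\ell$ applications: applications alternately use $P$ and its reversal; the last $CR_y$ of one application and the first $CR_y$ of the next act on the same pair and are merged into one $CR_y$. CNOT cost: each $CR_y$ counts 2, each SWAP 3, a $CR_y$ immediately followed by a SWAP on the same two qubits 3 in total, single-qubit gates 0. *)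

From mathcomp Require Import all_boot.
Set Implicit Arguments. Unset Strict Implicit. Unset Printing Implicit Defensive.

(* Gates of the circuit. Vertices (= physical qubits) are natural numbers.
   The rotation angle of CR_y is irrelevant for the CNOT cost and is omitted. *)
Inductive gate : Type :=
| CRy (c t : nat)
| SWAP (a b : nat).

Definition same_pair (a b c d : nat) : bool :=
  ((a == c) && (b == d)) || ((a == d) && (b == c)).

(* CNOT cost: CR_y = 2, SWAP = 3, a CR_y immediately followed by a SWAP on
   the same two qubits = 3 in total, single-qubit gates = 0. *)
Fixpoint cnot_cost (s : seq gate) : nat :=
  match s with
  | [::] => 0
  | CRy a b :: ((SWAP c d :: s'') as s') =>
      if same_pair a b c d then 3 + cnot_cost s'' else 2 + cnot_cost s'
  | CRy _ _ :: s' => 2 + cnot_cost s'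
  | SWAP _ _ :: s' => 3 + cnot_cost s'
  end.

(* x_i for 1-indexed i in the walk x = (x_1,...,x_k). *)
Definition wx (x : seq nat) (i : nat) : nat := nth 0 x i.-1.

(* The loop of a single application, with fuel; j is the current index,
   U the set of vertices already used as controls. *)
Fixpoint app_loop (fuel : nat) (x : seq nat) (j : nat) (U : seq nat)
  : seq gate :=
  match fuel with
  | 0 => [::]
  | fuel'.+1 =>
      let k := size x in
      let xj := wx x j in
      let xj1 := wx x j.+1 in
      let g1 := if xj1 \notin U then [:: CRy xj1 xj] else [::] in
      let U' := if xj1 \notin U then xj1 :: U else U in
      if j == k.-1 then g1
      else if wx x j.+2 == xj then g1 ++ app_loop fuel' x j.+2 U'
      else g1 ++ SWAP xj xj1 :: app_loop fuel' x j.+1 U'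
  end.

(* The loop runs at most k times (j strictly increases). *)
Definition single_app (x : seq nat) : seq gate :=
  CRy (wx x 1) (wx x 2) :: app_loop (size x) x 2 [:: wx x 1].

Definition merge_apps (s t : seq gate) : seq gate :=
  match t with
  | CRy a b :: t' =>
      match last (SWAP 0 0) s with
      | CRy c d => if same_pair a b c d then s ++ t' else s ++ t
      | _ => s ++ t
      end
  | _ => s ++ t
  end.

Definition path_strategy (P : seq nat) (l : nat) : seq gate :=
  foldl (fun acc i => merge_apps acc (single_app (if odd i then rev P else P)))
        [::] (iota 0 l).

Definition path_vertex (n v : nat) : bool := (1 <= v <= n).
Definition path_adj (n u v : nat) : bool :=
  [&& path_vertex n u, path_vertex n v & ((u.+1 == v) || (v.+1 == u))].

Definition covering_walk (n : nat) (W : seq nat) : bool :=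
  [&& W != [::], all (path_vertex n) W,
      path (path_adj n) (head 0 W) (behead W)
    & all (fun v => v \in W) (iota 1 n)].

Definition shortest_covering_walk (n : nat) (P : seq nat) : Prop :=
  covering_walk n P /\ forall W, covering_walk n W -> size P <= size W.

(** Along a duplicate-free walk x_1, ..., x_k the loop never revisits a vertex,
    so a single application is the gate sequence
    CR_y(x_1,x_2), then CR_y(x_(j+1),x_j) SWAP(x_j,x_(j+1)) for 2 <= j <= k-2,
    then CR_y(x_k,x_(k-1)); each CR_y-SWAP pair costs 3, giving 2 + 3(k-3) + 2.
    An application along the reversed walk starts with the very CR_y on which
    the previous one ended, so each further application of the path strategy
    saves 2.  Finally a shortest covering walk of the path graph on n vertices
    has exactly n (distinct) vertices. *)

From mathcomp Require Import all_boot.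
From mathcomp Require Import zify.

(* A CR_y followed by a SWAP on the same pair is charged 0 here: the pair
   costs 3, all of it counted on the SWAP. *)
Definition cry_cost (a b : nat) (s : seq gate) : nat :=
  if s is SWAP c d :: _ then (if same_pair a b c d then 0 else 2) else 2.

Definition starts_with_swap (s : seq gate) : bool :=
  if s is SWAP _ _ :: _ then true else false.

Lemma cnot_cost_CRy a b s :
  cnot_cost (CRy a b :: s) = cry_cost a b s + cnot_cost s.
Proof. by case: s => [|[c d|c d] s] //=; case: same_pair. Qed.

Lemma cnot_cost_cat s t : ~~ starts_with_swap t ->
  cnot_cost (s ++ t) = cnot_cost s + cnot_cost t.
Proof.
move=> t_noswap; elim: s => [|[a b|a b] s IHs] //; last by rewrite /= IHs addnA.
rewrite cat_cons !cnot_cost_CRy IHs addnA; congr (_ + _ + _).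
by case: s {IHs} => //; case: t t_noswap => [|[]].
Qed.

Fixpoint sweep (x : seq nat) (j m : nat) : seq gate :=
  if m is m'.+1 then
    CRy (wx x j.+1) (wx x j) :: SWAP (wx x j) (wx x j.+1) :: sweep x j.+1 m'
  else [:: CRy (wx x j.+1) (wx x j)].

Lemma cry_cost_sweep a b x j m : cry_cost a b (sweep x j m) = 2.
Proof. by case: m. Qed.

Lemma starts_with_swap_sweep x j m : starts_with_swap (sweep x j m) = false.
Proof. by case: m. Qed.

Lemma cnot_cost_sweep x j m : cnot_cost (sweep x j m) = 3 * m + 2.
Proof.
elim: m j => [|m IHm] j //=.
by rewrite /same_pair !eqxx orbT IHm; lia.
Qed.

Lemma last_sweep g x j m :
  last g (sweep x j m) = CRy (wx x (j + m).+1) (wx x (j + m)).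
Proof. by elim: m j g => [|m IHm] j g /=; rewrite ?addn0 // IHm addnS. Qed.

Lemma index_wx (x : seq nat) i : uniq x -> 0 < i <= size x -> index (wx x i) x = i.-1.
Proof. by move=> x_uniq /andP [i_gt0 i_le]; rewrite /wx index_uniq // prednK. Qed.

Lemma wx_uniq (x : seq nat) i k : uniq x -> 0 < i <= size x -> 0 < k <= size x ->
  (wx x i == wx x k) = (i == k).
Proof.
move=> x_uniq /andP [i_gt0 i_le] /andP [k_gt0 k_le].
by rewrite /wx nth_uniq ?prednK // -eqSS !prednK.
Qed.

Lemma app_loop_sweep fuel (x : seq nat) j m (U : seq nat) :
  uniq x -> 0 < j -> (j + m).+1 = size x -> m < fuel ->
  {in U, forall u, index u x < j} ->
  app_loop fuel x j U = sweep x j m.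
Proof.
(* [index] is 0-based: the hypothesis on [U] says it only holds x_1, ..., x_j. *)
move=> x_uniq; elim: m fuel j U => [|m IHm] [|fuel] j U // j_gt0 jm_last m_lt U_before /=.
all: have next_new : wx x j.+1 \notin U
       by apply/negP => /U_before; rewrite index_wx //=; [rewrite ltnn | lia].
all: rewrite next_new -jm_last /= ?addn0 ?eqxx //.
rewrite wx_uniq //; [|lia..].
have [-> ->] : (j == j + m.+1) = false /\ (j.+2 == j) = false by split; apply/eqP; lia.
rewrite (IHm fuel) //; first by rewrite addSnnS.
by move=> u; rewrite inE => /predU1P [->|/U_before]; rewrite ?index_wx //=; lia.
Qed.

Definition app_tail (x : seq nat) : seq gate := sweep x 2 (size x - 3).

Definition last_CRy (x : seq nat) : gate := CRy (wx x (size x)) (wx x (size x).-1).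

Section SingleApplication.

Variable x : seq nat.
Hypotheses (x_uniq : uniq x) (x_size : 3 <= size x).

Lemma single_appE : single_app x = CRy (wx x 1) (wx x 2) :: app_tail x.
Proof.
rewrite /single_app (@app_loop_sweep _ _ _ (size x - 3)) //; [lia | lia |].
by move=> u; rewrite inE => /eqP ->; rewrite index_wx //; lia.
Qed.

Lemma cnot_cost_app_tail : cnot_cost (app_tail x) = 3 * size x - 7.
Proof. by rewrite cnot_cost_sweep; lia. Qed.

Lemma cnot_cost_single_app : cnot_cost (single_app x) = 3 * size x - 5.
Proof. by rewrite single_appE cnot_cost_CRy cry_cost_sweep cnot_cost_app_tail; lia. Qed.

Lemma last_app_tail g : last g (app_tail x) = last_CRy x.
Proof. by rewrite last_sweep /last_CRy; congr CRy; congr wx; lia. Qed.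

Lemma last_single_app g : last g (single_app x) = last_CRy x.
Proof. by rewrite single_appE /= last_app_tail. Qed.

End SingleApplication.

Lemma single_app_rev (x : seq nat) : uniq x -> 3 <= size x ->
  single_app (rev x) = last_CRy x :: app_tail (rev x).
Proof.
move=> x_uniq x_size.
by rewrite single_appE ?rev_uniq ?size_rev // /last_CRy /wx /= !nth_rev ?subn1 ?subn2 //;
  exact: leq_trans _ x_size.
Qed.

Lemma merge_apps0 t : merge_apps [::] t = t.
Proof. by case: t => [|[]]. Qed.

Lemma merge_apps_CRy s a b t : last (SWAP 0 0) s = CRy a b ->
  merge_apps s (CRy a b :: t) = s ++ t.
Proof. by rewrite /merge_apps => ->; rewrite /same_pair !eqxx. Qed.

Definition alt_walk (P : seq nat) (i : nat) : seq nat := if odd i then rev P else P.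

Lemma path_strategyS P l :
  path_strategy P l.+1 = merge_apps (path_strategy P l) (single_app (alt_walk P l)).
Proof. by rewrite /path_strategy -addn1 iotaD foldl_cat. Qed.

Section PathStrategy.

Variable P : seq nat.
Hypotheses (P_uniq : uniq P) (P_size : 3 <= size P).

Lemma alt_walkS l : alt_walk P l.+1 = rev (alt_walk P l).
Proof. by rewrite /alt_walk /=; case: odd; rewrite ?revK. Qed.

Lemma alt_walk_uniq l : uniq (alt_walk P l).
Proof. by rewrite /alt_walk; case: odd; rewrite ?rev_uniq. Qed.

Lemma size_alt_walk l : size (alt_walk P l) = size P.
Proof. by rewrite /alt_walk; case: odd; rewrite ?size_rev. Qed.

Lemma path_strategy_merge l :
  last (SWAP 0 0) (path_strategy P l.+1) = last_CRy (alt_walk P l) ->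
  path_strategy P l.+2 = path_strategy P l.+1 ++ app_tail (alt_walk P l.+1).
Proof.
move=> last_prev; rewrite path_strategyS alt_walkS.
by rewrite single_app_rev ?alt_walk_uniq ?size_alt_walk // merge_apps_CRy.
Qed.

Lemma last_path_strategy g l :
  last g (path_strategy P l.+1) = last_CRy (alt_walk P l).
Proof.
elim: l g => [|l IHl] g.
  by rewrite path_strategyS merge_apps0 last_single_app ?alt_walk_uniq ?size_alt_walk.
by rewrite path_strategy_merge // last_cat last_app_tail ?alt_walk_uniq ?size_alt_walk.
Qed.

Lemma cnot_cost_path_strategy l :
  cnot_cost (path_strategy P l.+1) = 3 * size P - 5 + l * (3 * size P - 7).
Proof.
elim: l => [|l IHl].
  rewrite path_strategyS merge_apps0.
  by rewrite cnot_cost_single_app ?alt_walk_uniq ?size_alt_walk ?addn0.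
rewrite path_strategy_merge ?last_path_strategy // cnot_cost_cat ?starts_with_swap_sweep //.
by rewrite IHl cnot_cost_app_tail ?alt_walk_uniq ?size_alt_walk // mulSn; lia.
Qed.

End PathStrategy.

Lemma path_adj_iota n m k : 0 < m -> m + k <= n -> path (path_adj n) m (iota m.+1 k).
Proof.
elim: k m => [|k IHk] m m_gt0 mk_le //=.
by rewrite /path_adj /path_vertex eqxx IHk //; lia.
Qed.

Lemma covering_walk_iota {n} : 0 < n -> covering_walk n (iota 1 n).
Proof.
case: n => // n _; apply/and4P; split => //.
  by apply/allP => v; rewrite mem_iota /path_vertex.
exact: path_adj_iota.
Qed.

Lemma covering_walk_subset {n W} : covering_walk n W -> {subset iota 1 n <= W}.
Proof. by case/and4P => _ _ _ /allP. Qed.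

Lemma size_shortest_covering_walk {n P} : 0 < n -> shortest_covering_walk n P ->
  size P = n.
Proof.
move=> n_gt0 [P_walk P_min]; apply/eqP; rewrite eqn_leq.
have := P_min _ (covering_walk_iota n_gt0); rewrite size_iota => -> /=.
by have := uniq_leq_size (iota_uniq 1 n) (covering_walk_subset P_walk); rewrite size_iota.
Qed.

Lemma shortest_covering_walk_uniq {n P} : 0 < n -> shortest_covering_walk n P ->
  uniq P.
Proof.
move=> n_gt0 P_short; have [P_walk _] := P_short.
apply: leq_size_uniq (iota_uniq 1 n) (covering_walk_subset P_walk) _.
by rewrite size_iota (size_shortest_covering_walk n_gt0 P_short).
Qed.

Theorem lemma5 (n l : nat) (P : seq nat) :
  3 <= n -> 1 <= l -> shortest_covering_walk n P ->
  cnot_cost (single_app P) = 3 * n - 5 /\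
  cnot_cost (path_strategy P l) = 3 * n * l - 7 * l + 2.
Proof.
move=> n_ge3 l_ge1 P_short.
have P_size : size P = n by apply: size_shortest_covering_walk P_short; lia.
have P_uniq : uniq P by apply: shortest_covering_walk_uniq P_short; lia.
have P_size3 : 3 <= size P by rewrite P_size.
split; first by rewrite cnot_cost_single_app // P_size.
case: l l_ge1 => // l _.
by rewrite cnot_cost_path_strategy // P_size; nia.
Qed.
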